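(* Let $r_0>0$ and let $s>\sqrt{2}$ be arbitrary. Consider the stationary closed Nambu–Goto string in the five-dimensional Schwarzschild spacetime given by the embedding $$t=\frac{s r_0\,\tau}{\sqrt{2}},\quad r=s r_0,\quad \theta=\frac{\pi}{4},\quad \phi=\sigma,\quad \psi=\sigma+\tau,\qquad \tau\in\mathbb{R},\ \sigma\in\mathbb{R}/2\pi\mathbb{Z}.$$ Then this string is unstable under linear perturbations: there exist an integer $k$, a complex number $\omega$ with $\operatorname{Im}\omega>0$, and a nonzero constant vector $(c^1,c^2,c^3)\in\mathbb{C}^3$ such that $f^A(\tau,\sigma)=c^A e^{-i\omega\tau+ik\sigma}$ solves the linearized Nambu–Goto equation about this string.
   Context: The five-dimensional Schwarzschild spacetime with horizon radius $r_0>0$ has metric $$g=-\Big(1-\frac{r_0^2}{r^2}\Big)dt^2+\Big(1-\frac{r_0^2}{r^2}\Big)^{-1}dr^2+r^2\big[d\theta^2+\sin^2\theta\,d\phi^2+\cos^2\theta\,d\psi^2\big],$$ with $\theta\in(0,\pi/2)$ and $\phi,\psi\in\mathbb{R}/2\pi\mathbb{Z}$; units with speed of light $1$, signature $(-,+,+,+,+)$. A Nambu–Goto string is a timelike embedding $X^\mu(\xi^a)$ of a 2-dimensional worldsheet $N$ (coordinates $\xi^a=(\tau,\sigma)$) extremizing the area $-T\int d^2\xi\sqrt{|\det G|}$, where $G_{ab}=g_{\mu\nu}\partial_aX^\mu\partial_bX^\nu$ is the induced metric with Levi-Civita connection $D_a$; the equation of motion is $K^\mu{}_{ab}G^{ab}=0$,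 where $K^\mu{}_{ab}=D_aD_bX^\mu+\Gamma^\mu_{\nu\lambda}\partial_aX^\nu\partial_bX^\lambda$ is the second fundamental form (the given embedding satisfies it for every $s>\sqrt2$). Linear perturbations: choose an orthonormal frame $n_A{}^\mu$ ($A=1,2,3$) of the normal bundle of $N$ ($g_{\mu\nu}n_A{}^\mu\partial_aX^\nu=0$, $g_{\mu\nu}n_A{}^\mu n_B{}^\nu=\delta_{AB}$; e.g. $n_1=\frac{\sqrt{s^2-1}}{s}\partial_r$, $n_2=\frac{1}{sr_0}\partial_\theta$, $n_3=\frac{s^2}{\sqrt{(s^2-2)(s^2-1)}}\partial_t-\frac{\sqrt{2(s^2-1)}}{sr_0\sqrt{s^2-2}}(\partial_\phi-\partial_\psi)$), and write a normal perturbation as $\delta X^\mu=f^An_A{}^\mu$ with functions $f^A$ on $N$. Define $K_{Aab}=g_{\mu\nu}n_A{}^\mu K^\nu{}_{ab}$, the normal connection $\mu_{ABa}=g_{\mu\nu}n_A{}^\mu\partial_a n_B{}^\nu+\Gamma_{\alpha\beta\gamma}n_A{}^\alpha n_B{}^\beta\partial_aX^\gamma$ (antisymmetric in $A,B$), and $\mathscr{D}_af^B=D_af^B-\mu_A{}^B{}_af^A$, with frame indices raised/lowered by $\delta_{AB}$ and worldsheet indices by $G_{ab}$. The linearized Nambu–Goto equation is $$\mathscr{D}_a\mathscr{D}^af^B+\Big(K_A{}^{ab}K^B{}_{ab}+R_{\alpha\beta}n_A{}^\alpha n^{B\beta}-R_{\alpha\beta\gamma\delta}n_A{}^\alpha n_C{}^\beta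 n^{B\gamma}n^{C\delta}\Big)f^A=0,$$ where $R^\mu{}_{\nu\lambda\rho}=\Gamma^\mu_{\nu\rho,\lambda}-\Gamma^\mu_{\nu\lambda,\rho}+\Gamma^\mu_{\lambda\delta}\Gamma^\delta_{\nu\rho}-\Gamma^\mu_{\rho\delta}\Gamma^\delta_{\nu\lambda}$ and $R_{\nu\rho}=R^\mu{}_{\nu\mu\rho}$ are the spacetime Riemann and Ricci tensors. A mode $f^A\propto e^{-i\omega\tau+ik\sigma}$ with $\operatorname{Im}\omega>0$ grows exponentially in $\tau$; the string is called unstable if such a mode solution exists. *)

From Stdlib Require Import Reals Lra List ZArith.
From Coquelicot Require Import Coquelicot.
Open Scope R_scope.

Definition sumR (n : nat) (F : nat -> R) : R :=
  fold_right Rplus 0 (map F (seq 0 n)).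

(** Spacetime points: x : nat -> R, coordinates
    x 0 = t, x 1 = r, x 2 = theta, x 3 = phi, x 4 = psi. *)
Definition pt := nat -> R.

Definition pd (i : nat) (F : pt -> R) (x : pt) : R :=
  Derive (fun y => F (fun j => if Nat.eqb j i then y else x j)) (x i).

Definition wpd (a : nat) (F : R -> R -> R) (tau sigma : R) : R :=
  if Nat.eqb a 0 then Derive (fun t => F t sigma) tau
  else Derive (fun u => F tau u) sigma.

Definition gdiag (r0 : R) (mu : nat) (x : pt) : R :=
  let r := x 1%nat in let th := x 2%nat in
  match mu with
  | 0%nat => - (1 - r0 ^ 2 / r ^ 2)
  | 1%nat => / (1 - r0 ^ 2 / r ^ 2)
  | 2%nat => r ^ 2
  | 3%nat => r ^ 2 * (sin th) ^ 2
  | _ => r ^ 2 * (cos th) ^ 2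
  end.

Definition gmet (r0 : R) (mu nu : nat) (x : pt) : R :=
  if Nat.eqb mu nu then gdiag r0 mu x else 0.

Definition ginv (r0 : R) (mu nu : nat) (x : pt) : R :=
  if Nat.eqb mu nu then / gdiag r0 mu x else 0.

Definition Chr (r0 : R) (mu nu la : nat) (x : pt) : R :=
  / 2 * sumR 5 (fun de => ginv r0 mu de x *
     (pd nu (gmet r0 de la) x + pd la (gmet r0 de nu) x - pd de (gmet r0 nu la) x)).

Definition ChrL (r0 : R) (al be ga : nat) (x : pt) : R :=
  sumR 5 (fun de => gmet r0 al de x * Chr r0 de be ga x).

Definition Riem (r0 : R) (mu nu la rho : nat) (x : pt) : R :=
  pd la (Chr r0 mu nu rho) x - pd rho (Chr r0 mu nu la) x
  + sumR 5 (fun de => Chr r0 mu la de x * Chr r0 de nu rho x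
                     - Chr r0 mu rho de x * Chr r0 de nu la x).

Definition RiemL (r0 : R) (al be ga de : nat) (x : pt) : R :=
  sumR 5 (fun mu => gmet r0 al mu x * Riem r0 mu be ga de x).

Definition Ric (r0 : R) (nu rho : nat) (x : pt) : R :=
  sumR 5 (fun mu => Riem r0 mu nu mu rho x).

Definition Xemb (r0 s : R) (tau sigma : R) : pt :=
  fun mu => match mu with
  | 0%nat => s * r0 * tau / sqrt 2
  | 1%nat => s * r0
  | 2%nat => PI / 4
  | 3%nat => sigma
  | _ => sigma + tau
  end.

Definition dX (r0 s : R) (a mu : nat) (tau sigma : R) : R :=
  wpd a (fun t u => Xemb r0 s t u mu) tau sigma.

Definition Gind (r0 s : R) (a b : nat) (tau sigma : R) : R :=
  sumR 5 (fun mu => sumR 5 (fun nu =>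
    gmet r0 mu nu (Xemb r0 s tau sigma) * dX r0 s a mu tau sigma * dX r0 s b nu tau sigma)).

Definition Gdet (r0 s : R) (tau sigma : R) : R :=
  Gind r0 s 0 0 tau sigma * Gind r0 s 1 1 tau sigma
  - Gind r0 s 0 1 tau sigma * Gind r0 s 1 0 tau sigma.

Definition Ginv (r0 s : R) (a b : nat) (tau sigma : R) : R :=
  match a, b with
  | 0%nat, 0%nat => Gind r0 s 1 1 tau sigma / Gdet r0 s tau sigma
  | 1%nat, 1%nat => Gind r0 s 0 0 tau sigma / Gdet r0 s tau sigma
  | 0%nat, _ => - Gind r0 s 0 1 tau sigma / Gdet r0 s tau sigma
  | _, _ => - Gind r0 s 1 0 tau sigma / Gdet r0 s tau sigma
  end.

Definition wChr (r0 s : R) (c a b : nat) (tau sigma : R) : R :=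
  / 2 * sumR 2 (fun d => Ginv r0 s c d tau sigma *
     (wpd a (Gind r0 s d b) tau sigma + wpd b (Gind r0 s d a) tau sigma
      - wpd d (Gind r0 s a b) tau sigma)).

Definition Kff (r0 s : R) (mu a b : nat) (tau sigma : R) : R :=
  wpd a (dX r0 s b mu) tau sigma
  - sumR 2 (fun c => wChr r0 s c a b tau sigma * dX r0 s c mu tau sigma)
  + sumR 5 (fun nu => sumR 5 (fun la =>
      Chr r0 mu nu la (Xemb r0 s tau sigma) * dX r0 s a nu tau sigma * dX r0 s b la tau sigma)).

(** The orthonormal normal frame n_A^mu (A = 0,1,2 stand for A = 1,2,3 of the
    paper), given as functions on the worldsheet (here constant). *)
Definition nframe (r0 s : R) (A mu : nat) (tau sigma : R) : R :=
  match A, mu with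
  | 0%nat, 1%nat => sqrt (s ^ 2 - 1) / s
  | 1%nat, 2%nat => / (s * r0)
  | 2%nat, 0%nat => s ^ 2 / sqrt ((s ^ 2 - 2) * (s ^ 2 - 1))
  | 2%nat, 3%nat => - (sqrt (2 * (s ^ 2 - 1)) / (s * r0 * sqrt (s ^ 2 - 2)))
  | 2%nat, 4%nat => sqrt (2 * (s ^ 2 - 1)) / (s * r0 * sqrt (s ^ 2 - 2))
  | _, _ => 0
  end.

Definition KA (r0 s : R) (A a b : nat) (tau sigma : R) : R :=
  sumR 5 (fun mu => sumR 5 (fun nu =>
    gmet r0 mu nu (Xemb r0 s tau sigma) * nframe r0 s A mu tau sigma * Kff r0 s nu a b tau sigma)).

Definition ncon (r0 s : R) (A B a : nat) (tau sigma : R) : R :=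
  sumR 5 (fun mu => sumR 5 (fun nu =>
    gmet r0 mu nu (Xemb r0 s tau sigma) * nframe r0 s A mu tau sigma
    * wpd a (nframe r0 s B nu) tau sigma))
  + sumR 5 (fun al => sumR 5 (fun be => sumR 5 (fun ga =>
      ChrL r0 al be ga (Xemb r0 s tau sigma) * nframe r0 s A al tau sigma
      * nframe r0 s B be tau sigma * dX r0 s a ga tau sigma))).

Definition Pot (r0 s : R) (A B : nat) (tau sigma : R) : R :=
  let x := Xemb r0 s tau sigma in
  let n := fun C mu => nframe r0 s C mu tau sigma in
  sumR 2 (fun a => sumR 2 (fun b => sumR 2 (fun c => sumR 2 (fun d =>
    Ginv r0 s a c tau sigma * Ginv r0 s b d tau sigma
    * KA r0 s A c d tau sigma * KA r0 s B a b tau sigma))))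
  + sumR 5 (fun al => sumR 5 (fun be => Ric r0 al be x * n A al * n B be))
  - sumR 3 (fun C => sumR 5 (fun al => sumR 5 (fun be => sumR 5 (fun ga => sumR 5 (fun de =>
      RiemL r0 al be ga de x * n A al * n C be * n B ga * n C de))))).

Definition Dn (r0 s : R) (f : nat -> R -> R -> R) (B b : nat) (tau sigma : R) : R :=
  wpd b (f B) tau sigma - sumR 3 (fun A => ncon r0 s A B b tau sigma * f A tau sigma).

Definition LinNG (r0 s : R) (f : nat -> R -> R -> R) (B : nat) (tau sigma : R) : R :=
  sumR 2 (fun a => sumR 2 (fun b => Ginv r0 s a b tau sigma *
     (wpd a (Dn r0 s f B b) tau sigma
      - sumR 2 (fun c => wChr r0 s c a b tau sigma * Dn r0 s f B c tau sigma)
      - sumR 3 (fun A => ncon r0 s A B a tau sigma * Dn r0 s f A b tau sigma))))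
  + sumR 3 (fun A => Pot r0 s A B tau sigma * f A tau sigma).

Definition solves_real (r0 s : R) (f : nat -> R -> R -> R) : Prop :=
  forall (B : nat), (B < 3)%nat -> forall tau sigma : R, LinNG r0 s f B tau sigma = 0.

(** Complex perturbations: the equation has real coefficients, so a complex
    solution means real and imaginary parts both solve it. *)
Definition solves (r0 s : R) (f : nat -> R -> R -> C) : Prop :=
  solves_real r0 s (fun A t u => fst (f A t u)) /\
  solves_real r0 s (fun A t u => snd (f A t u)).

Definition cexp (z : C) : C := (exp (fst z) * cos (snd z), exp (fst z) * sin (snd z)).

Definition mode (omega : C) (k : Z) (c : nat -> C) : nat -> R -> R -> C :=
  fun A tau sigma =>
    Cmult (c A) (cexp (Cplus (Cmult (Cmult (0, -1) omega) (tau, 0))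
                             (Cmult (0, 1) (IZR k * sigma, 0)))).

From Stdlib Require Import Reals ZArith.
From Coquelicot Require Import Coquelicot.
From Stdlib Require Import Lra Lia List Setoid Morphisms FunctionalExtensionality.
Open Scope R_scope.

(* The worldsheet is an orbit of the abelian isometry group generated by ∂_t, ∂_φ
   and ∂_ψ at fixed r = s r0, θ = π/4.  Hence every coefficient of the linearized
   equation (inverse induced metric, normal connection, curvature potential) is
   constant and the worldsheet Christoffel symbols vanish, so for
   f = c exp (λ τ + i k σ) the equation reduces to a constant 3 × 3 system M c = 0.
   Write λ = ν + i k / 2 and X = 4 ν² + (s² - 2) k² / s².  Then det M is a cubic
   in X: for k = 0 it vanishes at X = 4 (3 - s²) / s², which is positive when
   s² < 3; for k = 1 and s² ≥ 3 it has negative discriminant, hence a non-real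
   root.  In both cases ν can be chosen with Re ν > 0, so ω = i λ has
   Im ω = Re ν > 0, and a column of the adjugate of M is a nonzero c. *)

Lemma sumR_S n F : sumR (S n) F = sumR n F + F n.
Proof.
  unfold sumR. rewrite seq_S, map_app, fold_right_app. simpl.
  induction (map F (seq 0 n)) as [|a l IH]; simpl; [ring | rewrite IH; ring].
Qed.

Lemma sumR_ext n F G : (forall i, (i < n)%nat -> F i = G i) -> sumR n F = sumR n G.
Proof. induction n; intros H; [reflexivity|]. rewrite !sumR_S, IHn, H; auto. Qed.

Lemma sumR_0 n : sumR n (fun _ => 0) = 0.
Proof. induction n; [reflexivity|]. rewrite sumR_S, IHn; ring. Qed.

#[export] Instance sumR_proper n : Proper (pointwise_relation nat eq ==> eq) (sumR n).
Proof. intros F G H. apply sumR_ext. intros; apply H. Qed.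

Lemma is_derive_sumR n (F : nat -> R -> R) dF x :
  (forall i, (i < n)%nat -> is_derive (F i) x (dF i)) ->
  is_derive (fun y => sumR n (fun i => F i y)) x (sumR n dF).
Proof.
  induction n; intros H.
  - apply (is_derive_const 0).
  - rewrite sumR_S. eapply is_derive_ext; [intro t; symmetry; apply sumR_S|].
    apply (is_derive_plus (fun y => sumR n (fun i => F i y)) (F n)); auto.
Qed.

Lemma pow_reduce_sqr x c n : x * x = c -> x ^ S (S n) = c * x ^ n.
Proof. intros H. simpl. rewrite <- H. ring. Qed.

Ltac neq0 := repeat split; first
  [ lra | intro; nra | apply Rgt_not_eq; nra | apply Rlt_not_eq; nra
  | apply Rmult_integral_contrapositive_currified; neq0
  | match goal with H : _ <> 0 |- _ <> 0 =>
      let E := fresh in intro E; apply H; rewrite <- E; field; lra end ].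

(** * The metric and its derivatives in the (r, θ) plane *)

Definition gcomp (r0 : R) (mu : nat) (r th : R) : R :=
  match mu with
  | 0%nat => - (1 - r0 ^ 2 / r ^ 2)
  | 1%nat => / (1 - r0 ^ 2 / r ^ 2)
  | 2%nat => r ^ 2
  | 3%nat => r ^ 2 * (sin th) ^ 2
  | _ => r ^ 2 * (cos th) ^ 2
  end.

(* [i] is the coordinate of differentiation: 1 is r, 2 is θ. *)
Definition dgcomp (r0 : R) (i mu : nat) (r th : R) : R :=
  match i, mu with
  | 1%nat, 0%nat => - (2 * r0 ^ 2 / r ^ 3)
  | 1%nat, 1%nat => - (2 * r0 ^ 2 / r ^ 3) / (1 - r0 ^ 2 / r ^ 2) ^ 2
  | 1%nat, 2%nat => 2 * r
  | 1%nat, 3%nat => 2 * r * (sin th) ^ 2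
  | 1%nat, _ => 2 * r * (cos th) ^ 2
  | 2%nat, 3%nat => r ^ 2 * sin (2 * th)
  | 2%nat, S (S (S (S _))) => - (r ^ 2 * sin (2 * th))
  | _, _ => 0
  end.

Definition ddgcomp (r0 : R) (j i mu : nat) (r th : R) : R :=
  match j, i, mu with
  | 1%nat, 1%nat, 0%nat => 6 * r0 ^ 2 / r ^ 4
  | 1%nat, 1%nat, 1%nat => 6 * r0 ^ 2 / r ^ 4 / (1 - r0 ^ 2 / r ^ 2) ^ 2
                           + 2 * (2 * r0 ^ 2 / r ^ 3) ^ 2 / (1 - r0 ^ 2 / r ^ 2) ^ 3
  | 1%nat, 1%nat, 2%nat => 2
  | 1%nat, 1%nat, 3%nat => 2 * (sin th) ^ 2
  | 1%nat, 1%nat, _ => 2 * (cos th) ^ 2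
  | 1%nat, 2%nat, 3%nat | 2%nat, 1%nat, 3%nat => 2 * r * sin (2 * th)
  | 1%nat, 2%nat, S (S (S (S _))) | 2%nat, 1%nat, S (S (S (S _))) => - (2 * r * sin (2 * th))
  | 2%nat, 2%nat, 3%nat => 2 * r ^ 2 * cos (2 * th)
  | 2%nat, 2%nat, S (S (S (S _))) => - (2 * r ^ 2 * cos (2 * th))
  | _, _, _ => 0
  end.

Section MetricDerivatives.
Variable r0 : R.
Hypothesis hr0 : 0 < r0.

Lemma lapse_neq0 r : r0 < r -> 1 - r0 ^ 2 / r ^ 2 <> 0.
Proof.
  intros h. replace (1 - r0 ^ 2 / r ^ 2) with ((r ^ 2 - r0 ^ 2) / r ^ 2) by (field; lra).
  unfold Rdiv; apply Rmult_integral_contrapositive_currified;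
    [nra | apply Rinv_neq_0_compat, pow_nonzero; lra].
Qed.

Ltac derive_side :=
  auto_derive; try neq0; try (rewrite ?sin_2a, ?cos_2a; field; neq0).

Lemma is_derive_gcomp_r mu r th : r0 < r ->
  is_derive (fun y => gcomp r0 mu y th) r (dgcomp r0 1 mu r th).
Proof.
  intros h. pose proof (lapse_neq0 r h).
  destruct mu as [|[|[|[|mu]]]]; simpl; derive_side.
Qed.

Lemma is_derive_gcomp_t mu r th : is_derive (fun y => gcomp r0 mu r y) th (dgcomp r0 2 mu r th).
Proof. destruct mu as [|[|[|[|mu]]]]; simpl; derive_side. Qed.

Lemma is_derive_dgcomp_r i mu r th : r0 < r ->
  is_derive (fun y => dgcomp r0 i mu y th) r (ddgcomp r0 1 i mu r th).
Proof.
  intros h. pose proof (lapse_neq0 r h).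
  destruct i as [|[|[|i]]]; destruct mu as [|[|[|[|mu]]]]; simpl; derive_side.
Qed.

Lemma is_derive_dgcomp_t i mu r th :
  is_derive (fun y => dgcomp r0 i mu r y) th (ddgcomp r0 2 i mu r th).
Proof.
  destruct i as [|[|[|i]]]; try destruct mu as [|[|[|[|mu]]]]; simpl; derive_side.
Qed.

End MetricDerivatives.

(** * Christoffel symbols and curvature in the (r, θ) plane *)

Definition dmet (r0 : R) (i a b : nat) (r th : R) : R :=
  if Nat.eqb a b then dgcomp r0 i a r th else 0.

Definition ddmet (r0 : R) (j i a b : nat) (r th : R) : R :=
  if Nat.eqb a b then ddgcomp r0 j i a r th else 0.

Definition chr_rt (r0 : R) (mu nu la : nat) (r th : R) : R :=
  / 2 * sumR 5 (fun de => (if Nat.eqb mu de then / gcomp r0 mu r th else 0) *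
     (dmet r0 nu de la r th + dmet r0 la de nu r th - dmet r0 de nu la r th)).

Definition dchr_rt (r0 : R) (j mu nu la : nat) (r th : R) : R :=
  / 2 * sumR 5 (fun de =>
     (if Nat.eqb mu de then - dgcomp r0 j mu r th / gcomp r0 mu r th ^ 2 else 0) *
       (dmet r0 nu de la r th + dmet r0 la de nu r th - dmet r0 de nu la r th)
     + (if Nat.eqb mu de then / gcomp r0 mu r th else 0) *
       (ddmet r0 j nu de la r th + ddmet r0 j la de nu r th - ddmet r0 j de nu la r th)).

Definition riem_rt (r0 : R) (mu nu la rho : nat) (r th : R) : R :=
  dchr_rt r0 la mu nu rho r th - dchr_rt r0 rho mu nu la r th
  + sumR 5 (fun de => chr_rt r0 mu la de r th * chr_rt r0 de nu rho r th
                     - chr_rt r0 mu rho de r th * chr_rt r0 de nu la r th).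

Section Curvature.
Variable r0 : R.
Hypothesis hr0 : 0 < r0.

Lemma pd_gmet i a b x : r0 < x 1%nat ->
  pd i (gmet r0 a b) x = dmet r0 i a b (x 1%nat) (x 2%nat).
Proof.
  intros h. unfold pd, gmet, dmet. destruct (Nat.eqb a b); [|apply Derive_const].
  destruct i as [|[|[|i]]]; unfold gdiag; cbn [Nat.eqb].
  - rewrite Derive_const. now destruct a as [|[|[|[|a]]]].
  - apply is_derive_unique, (is_derive_gcomp_r r0 hr0 a _ (x 2%nat)); auto.
  - apply is_derive_unique, (is_derive_gcomp_t r0 a (x 1%nat)).
  - rewrite Derive_const. now destruct a as [|[|[|[|a]]]].
Qed.

Lemma Chr_rt mu nu la x : r0 < x 1%nat ->
  Chr r0 mu nu la x = chr_rt r0 mu nu la (x 1%nat) (x 2%nat).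
Proof.
  intros h. unfold Chr, chr_rt. f_equal. apply sumR_ext. intros de _.
  unfold ginv. rewrite !pd_gmet; auto.
Qed.

Lemma is_derive_dmet_r i a b r th : r0 < r ->
  is_derive (fun y => dmet r0 i a b y th) r (ddmet r0 1 i a b r th).
Proof.
  intros h. unfold dmet, ddmet. destruct (Nat.eqb a b).
  - apply is_derive_dgcomp_r; auto.
  - apply (is_derive_const 0).
Qed.

Lemma is_derive_dmet_t i a b r th :
  is_derive (fun y => dmet r0 i a b r y) th (ddmet r0 2 i a b r th).
Proof.
  unfold dmet, ddmet. destruct (Nat.eqb a b).
  - apply is_derive_dgcomp_t.
  - apply (is_derive_const 0).
Qed.

Lemma is_derive_chr_rt_r mu nu la r th : r0 < r -> gcomp r0 mu r th <> 0 ->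
  is_derive (fun y => chr_rt r0 mu nu la y th) r (dchr_rt r0 1 mu nu la r th).
Proof.
  intros h hg. apply is_derive_scal, is_derive_sumR. intros de _.
  apply (is_derive_mult (fun y => if Nat.eqb mu de then / gcomp r0 mu y th else 0)
    (fun y => dmet r0 nu de la y th + dmet r0 la de nu y th - dmet r0 de nu la y th));
    [| |intros; apply Rmult_comm].
  - destruct (Nat.eqb mu de); [|apply (is_derive_const 0)].
    apply (is_derive_inv (fun y => gcomp r0 mu y th)); auto. apply is_derive_gcomp_r; auto.
  - apply @is_derive_minus; [apply @is_derive_plus|]; apply is_derive_dmet_r; auto.
Qed.

Lemma is_derive_chr_rt_t mu nu la r th : gcomp r0 mu r th <> 0 ->
  is_derive (fun y => chr_rt r0 mu nu la r y) th (dchr_rt r0 2 mu nu la r th).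
Proof.
  intros hg. apply is_derive_scal, is_derive_sumR. intros de _.
  apply (is_derive_mult (fun y => if Nat.eqb mu de then / gcomp r0 mu r y else 0)
    (fun y => dmet r0 nu de la r y + dmet r0 la de nu r y - dmet r0 de nu la r y));
    [| |intros; apply Rmult_comm].
  - destruct (Nat.eqb mu de); [|apply (is_derive_const 0)].
    apply (is_derive_inv (fun y => gcomp r0 mu r y)); auto. apply is_derive_gcomp_t.
  - apply @is_derive_minus; [apply @is_derive_plus|]; apply is_derive_dmet_t.
Qed.

Lemma dchr_rt_transverse j mu nu la r th : j <> 1%nat -> j <> 2%nat ->
  dchr_rt r0 j mu nu la r th = 0.
Proof.
  intros h1 h2. unfold dchr_rt.
  assert (hd : forall a, dgcomp r0 j a r th = 0).
  { intros a. destruct j as [|[|[|j]]]; [reflexivity|easy|easy|reflexivity]. }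
  assert (hdd : forall i a b, ddmet r0 j i a b r th = 0).
  { intros i a b. unfold ddmet. destruct (Nat.eqb a b); [|reflexivity].
    destruct j as [|[|[|j]]]; [reflexivity|easy|easy|reflexivity]. }
  rewrite (sumR_ext _ _ (fun _ => 0)); [rewrite sumR_0; ring|].
  intros de _. rewrite hd, !hdd. destruct (Nat.eqb mu de); unfold Rdiv; ring.
Qed.

Lemma pd_Chr j mu nu la x : r0 < x 1%nat -> gcomp r0 mu (x 1%nat) (x 2%nat) <> 0 ->
  pd j (Chr r0 mu nu la) x = dchr_rt r0 j mu nu la (x 1%nat) (x 2%nat).
Proof.
  intros h hg. unfold pd.
  assert (transverse : j <> 1%nat -> j <> 2%nat ->
    Derive (fun y => Chr r0 mu nu la (fun i => if Nat.eqb i j then y else x i)) (x j) = 0).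
  { intros h1 h2.
    rewrite (Derive_ext _ (fun _ => chr_rt r0 mu nu la (x 1%nat) (x 2%nat))); [apply Derive_const|].
    intros t. rewrite Chr_rt; destruct j as [|[|[|j]]]; easy. }
  destruct j as [|[|[|j]]].
  - rewrite dchr_rt_transverse; auto.
  - rewrite Derive_ext_loc with (g := fun t => chr_rt r0 mu nu la t (x 2%nat)).
    + apply is_derive_unique, is_derive_chr_rt_r; auto.
    + assert (hp : 0 < x 1%nat - r0) by lra.
      exists (mkposreal _ hp). intros t Ht.
      apply Rabs_lt_between' in Ht. rewrite Chr_rt; simpl in *; [reflexivity | lra].
  - rewrite (Derive_ext _ (fun t => chr_rt r0 mu nu la (x 1%nat) t)).
    + apply is_derive_unique, is_derive_chr_rt_t; auto.
    + intros t. apply Chr_rt; auto.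
  - rewrite dchr_rt_transverse; auto.
Qed.

Lemma Riem_rt mu nu la rho x : r0 < x 1%nat -> gcomp r0 mu (x 1%nat) (x 2%nat) <> 0 ->
  Riem r0 mu nu la rho x = riem_rt r0 mu nu la rho (x 1%nat) (x 2%nat).
Proof.
  intros h hg. unfold Riem, riem_rt. rewrite !pd_Chr; auto. f_equal.
  apply sumR_ext. intros. rewrite !Chr_rt; auto.
Qed.

End Curvature.

(** * Exact evaluation at the string *)

(* Reals with a syntactic zero: products with [SZero] vanish by computation, so
   the index sums below reduce to their structurally nonzero terms before any
   arithmetic is done. *)
Inductive sreal := SZero | SVal (x : R).

Definition sval (a : sreal) : R := match a with SZero => 0 | SVal x => x end.
Definition sadd (a b : sreal) : sreal :=
  match a, b with SZero, _ => b | _, SZero => a | SVal x, SVal y => SVal (x + y) end.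
Definition smul (a b : sreal) : sreal :=
  match a, b with SZero, _ | _, SZero => SZero | SVal x, SVal y => SVal (x * y) end.
Definition sopp (a : sreal) : sreal := match a with SZero => SZero | SVal x => SVal (- x) end.
Definition ssub (a b : sreal) : sreal := sadd a (sopp b).
Definition ssum (n : nat) (F : nat -> sreal) : sreal := fold_right sadd SZero (map F (seq 0 n)).

Lemma sval_add a b : sval (sadd a b) = sval a + sval b.
Proof. destruct a, b; simpl; ring. Qed.
Lemma sval_mul a b : sval (smul a b) = sval a * sval b.
Proof. destruct a, b; simpl; ring. Qed.
Lemma sval_opp a : sval (sopp a) = - sval a.
Proof. destruct a; simpl; ring. Qed.
Lemma sval_sub a b : sval (ssub a b) = sval a - sval b.
Proof. unfold ssub. rewrite sval_add, sval_opp. ring. Qed.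
Lemma sval_sum n F : sval (ssum n F) = sumR n (fun i => sval (F i)).
Proof.
  unfold ssum, sumR. induction (seq 0 n) as [|i l IH]; simpl; [reflexivity|].
  rewrite sval_add, IH. reflexivity.
Qed.

Lemma sin_PI4_sq : sin (PI / 4) ^ 2 = / 2.
Proof.
  rewrite sin_PI4. pose proof sqrt2_neq_0. unfold Rdiv. rewrite Rmult_1_l, pow_inv.
  simpl. rewrite Rmult_1_r, sqrt_sqrt; lra.
Qed.
Lemma cos_PI4_sq : cos (PI / 4) ^ 2 = / 2.
Proof. rewrite <- sin_cos_PI4. apply sin_PI4_sq. Qed.
Lemma sin_2_PI4 : sin (2 * (PI / 4)) = 1.
Proof. replace (2 * (PI / 4)) with (PI / 2) by field. apply sin_PI2. Qed.
Lemma cos_2_PI4 : cos (2 * (PI / 4)) = 0.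
Proof. replace (2 * (PI / 4)) with (PI / 2) by field. apply cos_PI2. Qed.

Definition chr_sp (r0 s : R) (mu nu la : nat) : sreal :=
  match mu, nu, la with
  | 0%nat, 0%nat, 1%nat | 0%nat, 1%nat, 0%nat => SVal (/ (s * r0 * (s ^ 2 - 1)))
  | 1%nat, 0%nat, 0%nat => SVal ((s ^ 2 - 1) / (s ^ 5 * r0))
  | 1%nat, 1%nat, 1%nat => SVal (- / (s * r0 * (s ^ 2 - 1)))
  | 1%nat, 2%nat, 2%nat => SVal (- (r0 * (s ^ 2 - 1) / s))
  | 1%nat, 3%nat, 3%nat | 1%nat, 4%nat, 4%nat => SVal (- (r0 * (s ^ 2 - 1) / (2 * s)))
  | 2%nat, 1%nat, 2%nat | 2%nat, 2%nat, 1%nat => SVal (/ (s * r0))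
  | 2%nat, 3%nat, 3%nat => SVal (- / 2)
  | 2%nat, 4%nat, 4%nat => SVal (/ 2)
  | 3%nat, 1%nat, 3%nat | 3%nat, 3%nat, 1%nat => SVal (/ (s * r0))
  | 3%nat, 2%nat, 3%nat | 3%nat, 3%nat, 2%nat => SVal 1
  | 4%nat, 1%nat, 4%nat | 4%nat, 4%nat, 1%nat => SVal (/ (s * r0))
  | 4%nat, 2%nat, 4%nat | 4%nat, 4%nat, 2%nat => SVal (-1)
  | _, _, _ => SZero
  end.

Definition dchr_sp (r0 s : R) (j mu nu la : nat) : sreal :=
  match j with
  | 1%nat =>
    match mu, nu, la with
    | 0%nat, 0%nat, 1%nat | 0%nat, 1%nat, 0%nat =>
        SVal ((1 - 3 * s ^ 2) / (s ^ 2 * r0 ^ 2 * (s ^ 2 - 1) ^ 2))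
    | 1%nat, 0%nat, 0%nat => SVal ((5 - 3 * s ^ 2) / (s ^ 6 * r0 ^ 2))
    | 1%nat, 1%nat, 1%nat => SVal ((3 * s ^ 2 - 1) / (s ^ 2 * r0 ^ 2 * (s ^ 2 - 1) ^ 2))
    | 1%nat, 2%nat, 2%nat => SVal (- ((s ^ 2 + 1) / s ^ 2))
    | 1%nat, 3%nat, 3%nat | 1%nat, 4%nat, 4%nat => SVal (- ((s ^ 2 + 1) / (2 * s ^ 2)))
    | 2%nat, 1%nat, 2%nat | 2%nat, 2%nat, 1%nat | 3%nat, 1%nat, 3%nat | 3%nat, 3%nat, 1%nat
    | 4%nat, 1%nat, 4%nat | 4%nat, 4%nat, 1%nat => SVal (- / (s ^ 2 * r0 ^ 2))
    | _, _, _ => SZero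
    end
  | 2%nat =>
    match mu, nu, la with
    | 1%nat, 3%nat, 3%nat => SVal (- (r0 * (s ^ 2 - 1) / s))
    | 1%nat, 4%nat, 4%nat => SVal (r0 * (s ^ 2 - 1) / s)
    | 3%nat, 2%nat, 3%nat | 3%nat, 3%nat, 2%nat | 4%nat, 2%nat, 4%nat | 4%nat, 4%nat, 2%nat =>
        SVal (-2)
    | _, _, _ => SZero
    end
  | _ => SZero
  end.

Section Tables.
Variables r0 s : R.
Hypothesis hr0 : 0 < r0.
Hypothesis hs1 : 1 < s.

Ltac eval_point :=
  cbv [chr_rt dchr_rt sumR fold_right map seq dmet ddmet dgcomp ddgcomp gcomp Nat.eqb
       chr_sp dchr_sp sval];
  rewrite ?sin_PI4_sq, ?cos_PI4_sq, ?sin_2_PI4, ?cos_2_PI4;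
  first [reflexivity | field; neq0].

Lemma chr_rt_string mu nu la : (mu < 5)%nat -> (nu < 5)%nat -> (la < 5)%nat ->
  chr_rt r0 mu nu la (s * r0) (PI / 4) = sval (chr_sp r0 s mu nu la).
Proof.
  intros H1 H2 H3.
  destruct mu as [|[|[|[|[|mu]]]]]; try lia; destruct nu as [|[|[|[|[|nu]]]]]; try lia;
  destruct la as [|[|[|[|[|la]]]]]; try lia; eval_point.
Qed.

Lemma dchr_rt_string j mu nu la : (mu < 5)%nat -> (nu < 5)%nat -> (la < 5)%nat ->
  dchr_rt r0 j mu nu la (s * r0) (PI / 4) = sval (dchr_sp r0 s j mu nu la).
Proof.
  intros H1 H2 H3.
  destruct (Nat.eq_dec j 1) as [->|h1]; [|destruct (Nat.eq_dec j 2) as [->|h2]].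
  3: { rewrite dchr_rt_transverse by auto. destruct j as [|[|[|j]]]; easy. }
  all: destruct mu as [|[|[|[|[|mu]]]]]; try lia; destruct nu as [|[|[|[|[|nu]]]]]; try lia;
    destruct la as [|[|[|[|[|la]]]]]; try lia; eval_point.
Qed.
End Tables.

(** * The coefficients on the worldsheet *)

Lemma wpd_const (F : R -> R -> R) c a tau sigma :
  (forall t u, F t u = c) -> wpd a F tau sigma = 0.
Proof.
  intros H. unfold wpd.
  destruct (Nat.eqb a 0); rewrite (Derive_ext _ (fun _ => c)) by (intros; apply H);
    apply Derive_const.
Qed.

Definition riem_sp (r0 s : R) (mu nu la rho : nat) : sreal :=
  sadd (ssub (dchr_sp r0 s la mu nu rho) (dchr_sp r0 s rho mu nu la))
       (ssum 5 (fun de => ssub (smul (chr_sp r0 s mu la de) (chr_sp r0 s de nu rho))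
                               (smul (chr_sp r0 s mu rho de) (chr_sp r0 s de nu la)))).

Definition met_sp (r0 s : R) (a b : nat) : sreal :=
  if Nat.eqb a b then SVal (gcomp r0 a (s * r0) (PI / 4)) else SZero.

Definition riemL_sp (r0 s : R) (al be ga de : nat) : sreal :=
  ssum 5 (fun mu => smul (met_sp r0 s al mu) (riem_sp r0 s mu be ga de)).

Definition ric_sp (r0 s : R) (nu rho : nat) : sreal :=
  ssum 5 (fun mu => riem_sp r0 s mu nu mu rho).

Definition chrL_sp (r0 s : R) (al be ga : nat) : sreal :=
  ssum 5 (fun de => smul (met_sp r0 s al de) (chr_sp r0 s de be ga)).

Definition tangent_sp (r0 s : R) (a mu : nat) : sreal :=
  match a, mu with
  | 0%nat, 0%nat => SVal (s * r0 / sqrt 2)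
  | 0%nat, (1 | 2 | 3)%nat | S _, (0 | 1 | 2)%nat => SZero
  | _, _ => SVal 1
  end.

Definition frame_sp (r0 s : R) (A mu : nat) : sreal :=
  match A, mu with
  | 0%nat, 1%nat => SVal (sqrt (s ^ 2 - 1) / s)
  | 1%nat, 2%nat => SVal (/ (s * r0))
  | 2%nat, 0%nat => SVal (s ^ 2 / sqrt ((s ^ 2 - 2) * (s ^ 2 - 1)))
  | 2%nat, 3%nat => SVal (- (sqrt (2 * (s ^ 2 - 1)) / (s * r0 * sqrt (s ^ 2 - 2))))
  | 2%nat, 4%nat => SVal (sqrt (2 * (s ^ 2 - 1)) / (s * r0 * sqrt (s ^ 2 - 2)))
  | _, _ => SZero
  end.

Definition K_sp (r0 s : R) (mu a b : nat) : sreal :=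
  ssum 5 (fun nu => ssum 5 (fun la =>
    smul (smul (chr_sp r0 s mu nu la) (tangent_sp r0 s a nu)) (tangent_sp r0 s b la))).

Definition KA_sp (r0 s : R) (A a b : nat) : sreal :=
  ssum 5 (fun mu => ssum 5 (fun nu =>
    smul (smul (met_sp r0 s mu nu) (frame_sp r0 s A mu)) (K_sp r0 s nu a b))).

Definition ncon_sp (r0 s : R) (A B a : nat) : sreal :=
  ssum 5 (fun al => ssum 5 (fun be => ssum 5 (fun ga =>
    smul (smul (smul (chrL_sp r0 s al be ga) (frame_sp r0 s A al)) (frame_sp r0 s B be))
         (tangent_sp r0 s a ga)))).

Definition riem_term_sp (r0 s : R) (A B : nat) : sreal :=
  ssum 3 (fun C => ssum 5 (fun al => ssum 5 (fun be => ssum 5 (fun ga => ssum 5 (fun de =>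
    smul (frame_sp r0 s A al) (smul (frame_sp r0 s C be) (smul (frame_sp r0 s B ga)
      (smul (frame_sp r0 s C de) (riemL_sp r0 s al be ga de))))))))).

(* Keeps [setoid_rewrite] in [sval_push] from unfolding the aggregates. *)
Opaque riem_sp riemL_sp ric_sp chrL_sp K_sp KA_sp ncon_sp riem_term_sp.

Ltac sval_push := repeat first
  [ setoid_rewrite sval_sum | setoid_rewrite sval_mul | setoid_rewrite sval_add
  | setoid_rewrite sval_sub | setoid_rewrite sval_opp ].

Ltac sum_congr := repeat (apply sumR_ext; intros ? ?).

Section Worldsheet.
Variables r0 s : R.
Hypothesis hr0 : 0 < r0.
Hypothesis hs1 : 1 < s.

Lemma gcomp_string_neq0 mu : gcomp r0 mu (s * r0) (PI / 4) <> 0.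
Proof.
  assert (h := lapse_neq0 r0 hr0 (s * r0) ltac:(nra)). assert (0 < s * r0) by nra.
  destruct mu as [|[|[|[|mu]]]]; unfold gcomp; rewrite ?sin_PI4_sq, ?cos_PI4_sq.
  - intro E; apply h; lra.
  - apply Rinv_neq_0_compat; auto.
  - apply pow_nonzero; lra.
  - apply Rmult_integral_contrapositive_currified; [apply pow_nonzero|]; lra.
  - apply Rmult_integral_contrapositive_currified; [apply pow_nonzero|]; lra.
Qed.

Lemma gmet_string_sp mu nu tau sigma :
  gmet r0 mu nu (Xemb r0 s tau sigma) = sval (met_sp r0 s mu nu).
Proof. unfold gmet, met_sp. now destruct (Nat.eqb mu nu). Qed.

Lemma Chr_string_sp mu nu la tau sigma : (mu < 5)%nat -> (nu < 5)%nat -> (la < 5)%nat ->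
  Chr r0 mu nu la (Xemb r0 s tau sigma) = sval (chr_sp r0 s mu nu la).
Proof. intros. rewrite Chr_rt by (simpl; nra). now apply chr_rt_string. Qed.

Lemma Riem_string_sp mu nu la rho tau sigma :
  (mu < 5)%nat -> (nu < 5)%nat -> (la < 5)%nat -> (rho < 5)%nat ->
  Riem r0 mu nu la rho (Xemb r0 s tau sigma) = sval (riem_sp r0 s mu nu la rho).
Proof.
  intros. rewrite Riem_rt by (simpl; try apply gcomp_string_neq0; nra). cbn [Xemb].
  unfold riem_rt; cbv beta delta [riem_sp]. sval_push. rewrite !dchr_rt_string by auto.
  f_equal. sum_congr. rewrite !chr_rt_string by auto. reflexivity.
Qed.

Lemma RiemL_string_sp al be ga de tau sigma : (be < 5)%nat -> (ga < 5)%nat -> (de < 5)%nat ->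
  RiemL r0 al be ga de (Xemb r0 s tau sigma) = sval (riemL_sp r0 s al be ga de).
Proof.
  intros. unfold RiemL; cbv beta delta [riemL_sp]. sval_push. sum_congr.
  rewrite gmet_string_sp, Riem_string_sp; auto.
Qed.

Lemma Ric_string_sp nu rho tau sigma : (nu < 5)%nat -> (rho < 5)%nat ->
  Ric r0 nu rho (Xemb r0 s tau sigma) = sval (ric_sp r0 s nu rho).
Proof.
  intros. unfold Ric; cbv beta delta [ric_sp]. sval_push. sum_congr.
  rewrite Riem_string_sp; auto.
Qed.

Lemma ChrL_string_sp al be ga tau sigma : (be < 5)%nat -> (ga < 5)%nat ->
  ChrL r0 al be ga (Xemb r0 s tau sigma) = sval (chrL_sp r0 s al be ga).
Proof.
  intros. unfold ChrL; cbv beta delta [chrL_sp]. sval_push. sum_congr.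
  rewrite gmet_string_sp, Chr_string_sp; auto.
Qed.

Lemma dX_string_sp a mu tau sigma : dX r0 s a mu tau sigma = sval (tangent_sp r0 s a mu).
Proof.
  unfold dX, wpd, Xemb. destruct a as [|a]; cbn [Nat.eqb];
    destruct mu as [|[|[|[|[|mu]]]]]; simpl sval; apply is_derive_unique; auto_derive; auto;
    try ring; try (field; apply sqrt2_neq_0).
Qed.

Lemma nframe_string_sp A mu tau sigma : nframe r0 s A mu tau sigma = sval (frame_sp r0 s A mu).
Proof. destruct A as [|[|[|A]]]; destruct mu as [|[|[|[|[|mu]]]]]; reflexivity. Qed.

Lemma Gind_const a b tau sigma : Gind r0 s a b tau sigma = Gind r0 s a b 0 0.
Proof. unfold Gind. sum_congr. rewrite !dX_string_sp. reflexivity. Qed.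

Lemma wChr_string_eq0 c a b tau sigma : wChr r0 s c a b tau sigma = 0.
Proof.
  unfold wChr. rewrite (sumR_ext _ _ (fun _ => 0)); [rewrite sumR_0; ring|].
  intros d _. rewrite !(wpd_const _ (Gind r0 s _ _ 0 0)) by (intros; apply Gind_const). ring.
Qed.

Lemma Kff_string_sp mu a b tau sigma : (mu < 5)%nat ->
  Kff r0 s mu a b tau sigma = sval (K_sp r0 s mu a b).
Proof.
  intros. unfold Kff; cbv beta delta [K_sp].
  rewrite (wpd_const _ (sval (tangent_sp r0 s b mu))) by (intros; apply dX_string_sp).
  rewrite (sumR_ext 2 _ (fun _ => 0)) by (intros; rewrite wChr_string_eq0; ring).
  rewrite sumR_0, Rminus_0_r, Rplus_0_l. sval_push. sum_congr.
  rewrite Chr_string_sp, !dX_string_sp; auto.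
Qed.

Lemma KA_string_sp A a b tau sigma : KA r0 s A a b tau sigma = sval (KA_sp r0 s A a b).
Proof.
  unfold KA; cbv beta delta [KA_sp]. sval_push. sum_congr.
  rewrite gmet_string_sp, nframe_string_sp, Kff_string_sp; auto.
Qed.

Lemma ncon_string_sp A B a tau sigma : ncon r0 s A B a tau sigma = sval (ncon_sp r0 s A B a).
Proof.
  unfold ncon; cbv beta delta [ncon_sp].
  rewrite (sumR_ext 5 _ (fun _ => 0)), sumR_0, Rplus_0_l.
  - sval_push. sum_congr. rewrite ChrL_string_sp, !nframe_string_sp, dX_string_sp; auto.
  - intros. rewrite (sumR_ext 5 _ (fun _ => 0)); [apply sumR_0|]. intros.
    rewrite (wpd_const _ (nframe r0 s B _ 0 0)) by reflexivity. ring.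
Qed.

Lemma riem_term_string_sp A B tau sigma :
  sumR 3 (fun C => sumR 5 (fun al => sumR 5 (fun be => sumR 5 (fun ga => sumR 5 (fun de =>
    RiemL r0 al be ga de (Xemb r0 s tau sigma) * nframe r0 s A al tau sigma
    * nframe r0 s C be tau sigma * nframe r0 s B ga tau sigma * nframe r0 s C de tau sigma)))))
  = sval (riem_term_sp r0 s A B).
Proof.
  cbv beta delta [riem_term_sp]. sval_push. sum_congr.
  rewrite RiemL_string_sp, !nframe_string_sp; auto. ring.
Qed.

End Worldsheet.

Definition Ginv_tab (r0 s : R) (a b : nat) : R :=
  match a, b with
  | 0%nat, 0%nat => - (4 / (r0 ^ 2 * (s ^ 2 - 2)))
  | 1%nat, 1%nat => - (2 / (s ^ 2 * r0 ^ 2 * (s ^ 2 - 2)))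
  | _, _ => 2 / (r0 ^ 2 * (s ^ 2 - 2))
  end.

Definition Gind_tab (r0 s : R) (a b : nat) : R :=
  match a, b with
  | 0%nat, 0%nat => r0 ^ 2 / 2
  | 1%nat, 1%nat => (s * r0) ^ 2
  | _, _ => (s * r0) ^ 2 / 2
  end.

Definition KA_tab (r0 s : R) (A a b : nat) : R :=
  match A, a, b with
  | 0%nat, 0%nat, 0%nat => - (r0 * sqrt (s ^ 2 - 1) * (s ^ 2 - 1) / (2 * s ^ 2))
  | 0%nat, 1%nat, 1%nat => - (r0 * sqrt (s ^ 2 - 1))
  | 0%nat, _, _ => - (r0 * sqrt (s ^ 2 - 1) / 2)
  | 1%nat, 1%nat, 1%nat => 0
  | 1%nat, _, _ => s * r0 / 2
  | _, _, _ => 0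
  end.

Definition conn_a (s : R) : R := sqrt (s ^ 2 - 2) / (sqrt 2 * s).
Definition conn_b (s : R) : R := sqrt (s ^ 2 - 1) / (sqrt 2 * sqrt (s ^ 2 - 2)).

Definition ncon_tab (s : R) (A B a : nat) : R :=
  match A, B, a with
  | 0%nat, 2%nat, 0%nat => - conn_a s
  | 2%nat, 0%nat, 0%nat => conn_a s
  | 1%nat, 2%nat, 0%nat => conn_b s
  | 2%nat, 1%nat, 0%nat => - conn_b s
  | 1%nat, 2%nat, 1%nat => 2 * conn_b s
  | 2%nat, 1%nat, 1%nat => - (2 * conn_b s)
  | _, _, _ => 0
  end.

Definition Pot_tab (r0 s : R) (A B : nat) : R :=
  match A, B with
  | 0%nat, 0%nat => 2 / (r0 ^ 2 * (s ^ 2 - 2))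
  | 1%nat, 1%nat => - (2 * (s ^ 2 + 1) / (s ^ 2 * r0 ^ 2 * (s ^ 2 - 2)))
  | 2%nat, 2%nat => 2 / (s ^ 2 * r0 ^ 2 * (s ^ 2 - 2))
  | _, _ => 0
  end.

Section Values.
Variables r0 s : R.
Hypothesis hr0 : 0 < r0.
Hypothesis hs1 : 1 < s.
Hypothesis hs2 : 2 < s ^ 2.

(* The frame involves √2, √(s²-1) and √(s²-2); after clearing denominators,
   their even powers are replaced by the radicands. *)
Ltac field_sqrt :=
  rewrite ?(sqrt_mult (s ^ 2 - 2) (s ^ 2 - 1)), ?(sqrt_mult 2 (s ^ 2 - 1)) by lra;
  let h2 := fresh in let h1 := fresh in let h0 := fresh in
  assert (h2 : sqrt 2 * sqrt 2 = 2) by (apply sqrt_sqrt; lra);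
  assert (h1 : sqrt (s ^ 2 - 1) * sqrt (s ^ 2 - 1) = s ^ 2 - 1) by (apply sqrt_sqrt; lra);
  assert (h0 : sqrt (s ^ 2 - 2) * sqrt (s ^ 2 - 2) = s ^ 2 - 2) by (apply sqrt_sqrt; lra);
  assert (sqrt 2 <> 0) by (apply Rgt_not_eq, sqrt_lt_R0; lra);
  assert (sqrt (s ^ 2 - 1) <> 0) by (apply Rgt_not_eq, sqrt_lt_R0; lra);
  assert (sqrt (s ^ 2 - 2) <> 0) by (apply Rgt_not_eq, sqrt_lt_R0; lra);
  field_simplify_eq;
  [ repeat rewrite (pow_reduce_sqr (sqrt 2) _ _ h2);
    repeat rewrite (pow_reduce_sqr (sqrt (s ^ 2 - 1)) _ _ h1);
    repeat rewrite (pow_reduce_sqr (sqrt (s ^ 2 - 2)) _ _ h0); ring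
  | neq0 ].

Lemma lapse_string : 1 - r0 ^ 2 / (s * r0) ^ 2 = (s ^ 2 - 1) / s ^ 2.
Proof. field. split; lra. Qed.

Ltac eval_sparse :=
  lazy [riem_term_sp ncon_sp KA_sp K_sp ric_sp riem_sp riemL_sp chrL_sp met_sp frame_sp tangent_sp
        chr_sp dchr_sp ssum sadd smul sopp ssub sval fold_right map seq Nat.eqb];
  cbv [gcomp]; rewrite ?lapse_string, ?sin_PI4_sq, ?cos_PI4_sq.

Lemma Gind_string a b tau sigma : (a < 2)%nat -> (b < 2)%nat ->
  Gind r0 s a b tau sigma = Gind_tab r0 s a b.
Proof.
  intros. unfold Gind. rewrite (sumR_ext 5 _ (fun mu => sumR 5 (fun nu =>
    sval (met_sp r0 s mu nu) * sval (tangent_sp r0 s a mu) * sval (tangent_sp r0 s b nu)))).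
  2: { intros. sum_congr. rewrite gmet_string_sp, !dX_string_sp. reflexivity. }
  destruct a as [|[|a]]; try lia; destruct b as [|[|b]]; try lia;
    cbv [sumR Gind_tab]; eval_sparse; field_sqrt.
Qed.

Lemma Gdet_string tau sigma : Gdet r0 s tau sigma = - (s ^ 2 * r0 ^ 4 * (s ^ 2 - 2) / 4).
Proof. unfold Gdet. rewrite !Gind_string by lia. cbv [Gind_tab]. field. Qed.

Lemma Ginv_string a b tau sigma : (a < 2)%nat -> (b < 2)%nat ->
  Ginv r0 s a b tau sigma = Ginv_tab r0 s a b.
Proof.
  intros. unfold Ginv. rewrite Gdet_string, !Gind_string by lia.
  destruct a as [|[|a]]; try lia; destruct b as [|[|b]]; try lia;
    cbv [Gind_tab Ginv_tab]; field; neq0.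
Qed.

Lemma Ric_string_eq0 nu rho tau sigma : (nu < 5)%nat -> (rho < 5)%nat ->
  Ric r0 nu rho (Xemb r0 s tau sigma) = 0.
Proof.
  intros. rewrite Ric_string_sp by auto.
  destruct nu as [|[|[|[|[|nu]]]]]; try lia; destruct rho as [|[|[|[|[|rho]]]]]; try lia;
    eval_sparse; first [reflexivity | field; neq0].
Qed.

Lemma KA_string A a b tau sigma : (A < 3)%nat -> (a < 2)%nat -> (b < 2)%nat ->
  KA r0 s A a b tau sigma = KA_tab r0 s A a b.
Proof.
  intros. rewrite KA_string_sp by lra.
  destruct A as [|[|[|A]]]; try lia; destruct a as [|[|a]]; try lia; destruct b as [|[|b]]; try lia;
    cbv [KA_tab]; eval_sparse; first [reflexivity | field_sqrt].
Qed.

Lemma ncon_string A B a tau sigma : (A < 3)%nat -> (B < 3)%nat -> (a < 2)%nat ->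
  ncon r0 s A B a tau sigma = ncon_tab s A B a.
Proof.
  intros. rewrite ncon_string_sp by lra.
  destruct A as [|[|[|A]]]; try lia; destruct B as [|[|[|B]]]; try lia;
    destruct a as [|[|a]]; try lia;
    cbv [ncon_tab conn_a conn_b]; eval_sparse; first [reflexivity | field_sqrt].
Qed.

Lemma Pot_string A B tau sigma : (A < 3)%nat -> (B < 3)%nat ->
  Pot r0 s A B tau sigma = Pot_tab r0 s A B.
Proof.
  intros. unfold Pot; cbv zeta.
  rewrite riem_term_string_sp by lra.
  rewrite (sumR_ext 5 _ (fun _ => 0)), sumR_0, Rplus_0_r.
  2: { intros. rewrite (sumR_ext 5 _ (fun _ => 0)), sumR_0; [reflexivity|].
       intros. rewrite Ric_string_eq0 by auto. ring. }
  rewrite (sumR_ext 2 _ (fun a => sumR 2 (fun b => sumR 2 (fun c => sumR 2 (fun d =>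
    Ginv_tab r0 s a c * Ginv_tab r0 s b d * KA_tab r0 s A c d * KA_tab r0 s B a b))))).
  2: { intros. sum_congr. rewrite !Ginv_string, !KA_string by auto. reflexivity. }
  destruct A as [|[|[|A]]]; try lia; destruct B as [|[|[|B]]]; try lia;
    cbv [sumR Pot_tab Ginv_tab KA_tab]; eval_sparse; first [reflexivity | field_sqrt].
Qed.

End Values.

(** * Plane-wave perturbations *)

Definition Csum (n : nat) (F : nat -> C) : C := fold_right Cplus 0%C (map F (seq 0 n)).

Definition part (b : bool) : C -> R := if b then Re else Im.

Lemma part_sum_mul b n F E : part b (Csum n F * E)%C = sumR n (fun i => part b (F i * E)%C).
Proof.
  unfold Csum, sumR. induction (seq 0 n) as [|i l IH]; destruct b; simpl in *;
    try rewrite <- IH; simpl; ring.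
Qed.

Lemma part_sub_mul b x y E : part b ((x - y) * E)%C = part b (x * E)%C - part b (y * E)%C.
Proof. destruct b; simpl; ring. Qed.

Lemma part_add_mul b x y E : part b ((x + y) * E)%C = part b (x * E)%C + part b (y * E)%C.
Proof. destruct b; simpl; ring. Qed.

Lemma part_scal_mul b (r : R) z E : part b (r * z * E)%C = r * part b (z * E)%C.
Proof. destruct b; simpl; ring. Qed.

Definition wave (lam : C) (k t u : R) : C := cexp (Re lam * t, Im lam * t + k * u).

Definition wsymbol (lam : C) (k : R) (a : nat) : C := if Nat.eqb a 0 then lam else (0, k).

Lemma wpd_wave b z lam k a tau sigma :
  wpd a (fun t u => part b (z * wave lam k t u)%C) tau sigma
  = part b (wsymbol lam k a * z * wave lam k tau sigma)%C.
Proof.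
  destruct z as [zr zi], lam as [lr li].
  unfold wpd, wsymbol, wave, cexp; destruct (Nat.eqb a 0), b; simpl;
    apply is_derive_unique; auto_derive; auto; ring.
Qed.

Lemma wpd_ext a (F G : R -> R -> R) tau sigma :
  (forall t u, F t u = G t u) -> wpd a F tau sigma = wpd a G tau sigma.
Proof. intros H. unfold wpd. destruct (Nat.eqb a 0); apply Derive_ext; intros; apply H. Qed.

Section ConstantCoefficients.
Variables (r0 s k : R) (lam : C) (b : bool) (c : nat -> C).
Variables (Gc : nat -> nat -> R) (Nc : nat -> nat -> nat -> R) (Pc : nat -> nat -> R).
Hypothesis hG : forall a a' t u, (a < 2)%nat -> (a' < 2)%nat -> Ginv r0 s a a' t u = Gc a a'.
Hypothesis hN : forall A B a t u, (A < 3)%nat -> (B < 3)%nat -> (a < 2)%nat ->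
  ncon r0 s A B a t u = Nc A B a.
Hypothesis hP : forall A B t u, (A < 3)%nat -> (B < 3)%nat -> Pot r0 s A B t u = Pc A B.

Definition Dn_symbol (B a : nat) : C :=
  (wsymbol lam k a * c B - Csum 3 (fun A => Nc A B a * c A))%C.

Definition LinNG_symbol (B : nat) : C :=
  (Csum 2 (fun a => Csum 2 (fun a' => Gc a a' *
     (wsymbol lam k a * Dn_symbol B a' - Csum 3 (fun A => Nc A B a * Dn_symbol A a'))))
   + Csum 3 (fun A => Pc A B * c A))%C.

Let f (A : nat) (t u : R) : R := part b (c A * wave lam k t u)%C.

Lemma Dn_wave B a t u : (B < 3)%nat -> (a < 2)%nat ->
  Dn r0 s f B a t u = part b (Dn_symbol B a * wave lam k t u)%C.
Proof.
  intros. unfold Dn, Dn_symbol. rewrite part_sub_mul, part_sum_mul. f_equal.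
  - apply wpd_wave.
  - apply sumR_ext. intros A HA. rewrite hN, part_scal_mul; auto.
Qed.

Lemma LinNG_wave B tau sigma : (B < 3)%nat ->
  LinNG r0 s f B tau sigma = part b (LinNG_symbol B * wave lam k tau sigma)%C.
Proof.
  intros HB. unfold LinNG, LinNG_symbol. rewrite part_add_mul, !part_sum_mul. f_equal.
  - apply sumR_ext. intros a Ha. rewrite part_sum_mul. apply sumR_ext. intros a' Ha'.
    rewrite hG, part_scal_mul by auto. f_equal.
    rewrite (sumR_ext 2 _ (fun _ => 0)) by (intros; rewrite wChr_string_eq0; ring).
    rewrite sumR_0, Rminus_0_r, part_sub_mul, part_sum_mul. f_equal.
    + rewrite (wpd_ext a _ (fun t u => part b (Dn_symbol B a' * wave lam k t u)%C))
        by (intros; apply Dn_wave; auto).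
      apply wpd_wave.
    + apply sumR_ext. intros A HA. rewrite hN, Dn_wave, part_scal_mul; auto.
  - apply sumR_ext. intros A HA. rewrite hP, part_scal_mul; auto.
Qed.

End ConstantCoefficients.

(** * The dispersion relation *)

Definition arrow (d0 d1 d2 e f : C) (B A : nat) : C :=
  match B, A with
  | 0%nat, 0%nat => d0 | 0%nat, 2%nat => - e
  | 1%nat, 1%nat => d1 | 1%nat, 2%nat => f
  | 2%nat, 0%nat => e | 2%nat, 1%nat => - f | 2%nat, 2%nat => d2
  | _, _ => 0
  end.

Definition arrow_det (d0 d1 d2 e f : C) : C := (d0 * d1 * d2 + e * e * d1 + f * f * d0)%C.

(* A column of the adjugate. *)
Definition arrow_null (d0 d1 e f : C) (A : nat) : C :=
  match A with 0%nat => e * d1 | 1%nat => - (f * d0) | _ => d0 * d1 end%C.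

Lemma arrow_mul_null d0 d1 d2 e f B : (B < 3)%nat ->
  Csum 3 (fun A => arrow d0 d1 d2 e f B A * arrow_null d0 d1 e f A)%C
  = if Nat.eqb B 2 then arrow_det d0 d1 d2 e f else 0%C.
Proof.
  intros. destruct B as [|[|[|B]]]; try lia;
    cbv [Csum arrow arrow_null arrow_det fold_right map seq Nat.eqb]; ring.
Qed.

Definition disp_X (s k : R) (nu : C) : C := (4 * (nu * nu) + RtoC ((s ^ 2 - 2) / s ^ 2 * k ^ 2))%C.
Definition disp_d0 (s k : R) (nu : C) : C := (disp_X s k nu - RtoC (4 * (s ^ 2 - 1) / s ^ 2))%C.
Definition disp_d1 (s k : R) (nu : C) : C := (disp_X s k nu + 4)%C.
Definition disp_e (s : R) (nu : C) : C := (RtoC (8 * conn_a s) * nu)%C.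
Definition disp_f (s k : R) : C := (0, - (4 * (s ^ 2 - 2) / s ^ 2 * k * conn_b s)).

Definition disp_matrix (s k : R) (nu : C) : nat -> nat -> C :=
  arrow (disp_d0 s k nu) (disp_d1 s k nu) (disp_X s k nu) (disp_e s nu) (disp_f s k).
Definition disp_det (s k : R) (nu : C) : C :=
  arrow_det (disp_d0 s k nu) (disp_d1 s k nu) (disp_X s k nu) (disp_e s nu) (disp_f s k).
Definition disp_null (s k : R) (nu : C) : nat -> C :=
  arrow_null (disp_d0 s k nu) (disp_d1 s k nu) (disp_e s nu) (disp_f s k).

Section Dispersion.
Variables r0 s : R.
Hypothesis hr0 : 0 < r0.
Hypothesis hs2 : 2 < s ^ 2.

Lemma conn_a_sqr : conn_a s * conn_a s = (s ^ 2 - 2) / (2 * s ^ 2).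
Proof.
  unfold conn_a. pose proof sqrt2_neq_0.
  field_simplify; try neq0. rewrite !pow2_sqrt by lra. field; neq0.
Qed.

Lemma conn_b_sqr : conn_b s * conn_b s = (s ^ 2 - 1) / (2 * (s ^ 2 - 2)).
Proof.
  unfold conn_b. pose proof sqrt2_neq_0.
  assert (sqrt (s ^ 2 - 2) <> 0) by (apply Rgt_not_eq, sqrt_lt_R0; lra).
  field_simplify; try neq0. rewrite !pow2_sqrt by lra. field; neq0.
Qed.

Ltac conn_field :=
  field_simplify_eq;
  [ repeat rewrite (pow_reduce_sqr (conn_a s) _ _ conn_a_sqr);
    repeat rewrite (pow_reduce_sqr (conn_b s) _ _ conn_b_sqr); field; neq0
  | neq0 .. ].

Lemma LinNG_symbol_tab k (nu : C) (c : nat -> C) B : (B < 3)%nat ->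
  LinNG_symbol k (Cplus nu (0, k / 2)) c (Ginv_tab r0 s) (ncon_tab s) (Pot_tab r0 s) B
  = (- / (r0 ^ 2 * (s ^ 2 - 2)) * Csum 3 (fun A => disp_matrix s k nu B A * c A))%C.
Proof.
  intros HB. assert (s <> 0) by (intro; subst; lra).
  destruct nu as [x y], (c 0%nat) as [c0r c0i] eqn:E0, (c 1%nat) as [c1r c1i] eqn:E1,
    (c 2%nat) as [c2r c2i] eqn:E2.
  destruct B as [|[|[|B]]]; try lia;
  cbv [LinNG_symbol Dn_symbol disp_matrix disp_d0 disp_d1 disp_X disp_e disp_f arrow Csum wsymbol
       fold_right map seq Nat.eqb Ginv_tab ncon_tab Pot_tab]; rewrite ?E0, ?E1, ?E2;
  apply injective_projections; simpl; conn_field.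
Qed.

Lemma disp_det_k0 nu : disp_det s 0 nu =
  (disp_X s 0 nu * (disp_X s 0 nu + 4) * (disp_X s 0 nu - RtoC (4 * (3 - s ^ 2) / s ^ 2)))%C.
Proof.
  destruct nu as [x y].
  cbv [disp_det arrow_det disp_d0 disp_d1 disp_X disp_e disp_f].
  apply injective_projections; simpl; conn_field.
Qed.

Lemma disp_det_k1 nu : (RtoC (s ^ 6) * disp_det s 1 nu =
  let z := (RtoC (s ^ 2) * disp_X s 1 nu)%C in
  z * z * z + RtoC (8 * s ^ 2 - 12) * z * z + RtoC (8 * s ^ 2 - 48) * z + RtoC (32 * s ^ 2 - 64))%C.
Proof.
  destruct nu as [x y].
  cbv [disp_det arrow_det disp_d0 disp_d1 disp_X disp_e disp_f].
  apply injective_projections; simpl; conn_field.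
Qed.

End Dispersion.

(** * Growing modes *)

Lemma C_neq0_Re (z : C) : Re z <> 0 -> z <> 0%C.
Proof. intros H E. apply H. rewrite E. reflexivity. Qed.

Lemma C_neq0_Im (z : C) : Im z <> 0 -> z <> 0%C.
Proof. intros H E. apply H. rewrite E. reflexivity. Qed.

Lemma Csqrt_right_half (w : C) : 0 < Im w -> exists nu : C, 0 < Re nu /\ (nu * nu)%C = w.
Proof.
  destruct w as [a b]; simpl. intros hb.
  set (m := sqrt (a ^ 2 + b ^ 2)).
  assert (hm : m * m = a ^ 2 + b ^ 2) by (apply sqrt_sqrt; nra).
  assert (0 <= m) by apply sqrt_pos.
  assert (0 < m + a) by nra. assert (0 < m - a) by nra.
  exists (sqrt ((m + a) / 2), sqrt ((m - a) / 2)). split; [apply sqrt_lt_R0; simpl; lra|].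
  apply injective_projections; simpl.
  - rewrite !sqrt_sqrt by lra. field.
  - replace (_ + _) with (2 * sqrt ((m + a) / 2 * ((m - a) / 2)))
      by (rewrite sqrt_mult_alt by lra; ring).
    replace ((m + a) / 2 * ((m - a) / 2)) with ((b / 2) ^ 2) by (field_simplify; nra).
    rewrite sqrt_pow2 by lra. field.
Qed.

Definition cubic_disc (b c d : R) : R :=
  18 * b * c * d - 4 * b ^ 3 * d + b ^ 2 * c ^ 2 - 4 * c ^ 3 - 27 * d ^ 2.

(* Dividing out the real root [z1] leaves a quadratic whose discriminant, times
   the square of [p'(z1)], is the discriminant of the cubic. *)
Lemma cubic_nonreal_root (b c d z1 : R) :
  z1 ^ 3 + b * z1 ^ 2 + c * z1 + d = 0 -> cubic_disc b c d < 0 ->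
  exists z : C, 0 < Im z /\ (z * z * z + b * z * z + c * z + d = 0)%C.
Proof.
  intros hz1 hdisc.
  replace d with (- (z1 ^ 3 + b * z1 ^ 2 + c * z1)) in * by lra.
  set (B := b + z1). set (G := c + b * z1 + z1 ^ 2).
  assert (hq : B ^ 2 - 4 * G < 0).
  { assert (E : cubic_disc b c (- (z1 ^ 3 + b * z1 ^ 2 + c * z1))
                = (B ^ 2 - 4 * G) * (3 * z1 ^ 2 + 2 * b * z1 + c) ^ 2)
      by (unfold cubic_disc, B, G; ring).
    rewrite E in hdisc. destruct (Rlt_le_dec (B ^ 2 - 4 * G) 0); auto.
    pose proof (pow2_ge_0 (3 * z1 ^ 2 + 2 * b * z1 + c)). nra. }
  set (zi := sqrt (4 * G - B ^ 2) / 2).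
  assert (hzi : zi * zi = (4 * G - B ^ 2) / 4).
  { unfold zi. replace (sqrt (4 * G - B ^ 2) / 2 * (sqrt (4 * G - B ^ 2) / 2))
      with (sqrt (4 * G - B ^ 2) * sqrt (4 * G - B ^ 2) / 4) by field.
    rewrite sqrt_sqrt by lra. reflexivity. }
  exists (- B / 2, zi). split.
  - apply Rdiv_lt_0_compat; [apply sqrt_lt_R0|]; lra.
  - apply injective_projections; simpl; ring_simplify;
      repeat rewrite (pow_reduce_sqr zi _ _ hzi); unfold B, G; field.
Qed.

Lemma conn_a_pos s : 2 < s ^ 2 -> 0 < s -> 0 < conn_a s.
Proof.
  intros. unfold conn_a. apply Rdiv_lt_0_compat; [apply sqrt_lt_R0; lra|].
  apply Rmult_lt_0_compat; [apply sqrt_lt_R0|]; lra.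
Qed.

Lemma disp_e_neq0 s nu : 2 < s ^ 2 -> 0 < s -> 0 < Re nu -> disp_e s nu <> 0%C.
Proof.
  intros hs2 hs0 hnu. apply C_neq0_Re. unfold disp_e. destruct nu as [x y]. simpl in *.
  pose proof (conn_a_pos s hs2 hs0). nra.
Qed.

Lemma disp_root_k0 s : 2 < s ^ 2 < 3 -> 0 < s ->
  exists nu : C, 0 < Re nu /\ disp_det s 0 nu = 0%C /\ disp_null s 0 nu 0 <> 0%C.
Proof.
  intros [hs2 hs3] hs0.
  set (Y := (3 - s ^ 2) / s ^ 2).
  assert (hY : 0 < Y) by (apply Rdiv_lt_0_compat; lra).
  exists (sqrt Y, 0).
  assert (hX : disp_X s 0 (sqrt Y, 0) = RtoC (4 * Y)).
  { unfold disp_X. apply injective_projections; simpl; [|ring].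
    rewrite Rmult_0_l, Rminus_0_r, sqrt_sqrt by lra. field. lra. }
  split; [apply sqrt_lt_R0; auto|]. split.
  - rewrite disp_det_k0 by lra. rewrite hX.
    apply injective_projections; simpl; unfold Y; field; lra.
  - apply Cmult_neq_0.
    + apply disp_e_neq0; auto. apply sqrt_lt_R0; auto.
    + unfold disp_d1. rewrite hX. apply C_neq0_Re. simpl. lra.
Qed.

Definition cubic_k1 (u z : R) : R :=
  z ^ 3 + (8 * u - 12) * z ^ 2 + (8 * u - 48) * z + (32 * u - 64).

Lemma cubic_k1_real_root u : 2 < u -> exists z1, cubic_k1 u z1 = 0.
Proof.
  intros hu. destruct (IVT (cubic_k1 u) (- (8 * u)) 0) as [z1 [_ hz1]].
  - apply derivable_continuous. unfold cubic_k1. reg.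
  - lra.
  - unfold cubic_k1. nra.
  - unfold cubic_k1. lra.
  - eauto.
Qed.

Lemma cubic_k1_disc_neg u : 3 <= u -> cubic_disc (8 * u - 12) (8 * u - 48) (32 * u - 64) < 0.
Proof.
  intros hu. unfold cubic_disc. set (t := u - 3). replace u with (t + 3) by (unfold t; ring).
  assert (0 <= t) by (unfold t; lra).
  assert (0 <= t ^ 2) by nra.
  assert (0 <= t ^ 3) by (simpl; nra). assert (0 <= t ^ 4) by (simpl; nra).
  ring_simplify. nra.
Qed.

Lemma disp_root_k1 s : 3 <= s ^ 2 -> 0 < s ->
  exists nu : C, 0 < Re nu /\ disp_det s 1 nu = 0%C /\ disp_null s 1 nu 0 <> 0%C.
Proof.
  intros hs3 hs0. assert (hs2 : 2 < s ^ 2) by lra.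
  set (u := s ^ 2) in *. assert (hu : 0 < u) by lra.
  destruct (cubic_k1_real_root u) as [z1 hz1]; [lra|].
  destruct (cubic_nonreal_root _ _ _ z1 hz1 (cubic_k1_disc_neg u hs3)) as [z [hzi hz]].
  set (X := (RtoC (/ u) * z)%C).
  destruct (Csqrt_right_half ((X - RtoC ((u - 2) / u)) / 4)%C) as [nu [hnu hnu2]].
  { unfold X. destruct z as [zr zi]. simpl in *. field_simplify; [|lra].
    apply Rdiv_lt_0_compat; nra. }
  assert (hX : disp_X s 1 nu = X).
  { unfold disp_X. rewrite hnu2. fold u.
    apply injective_projections; simpl; field; lra. }
  exists nu. split; [exact hnu|]. split.
  - assert (hdet := disp_det_k1 s hs2 nu). cbv zeta in hdet.
    rewrite hX in hdet. fold u in hdet.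
    replace (RtoC u * X)%C with z in hdet
      by (unfold X; apply injective_projections; simpl; field; lra).
    rewrite hz in hdet.
    assert (hs6 : RtoC (s ^ 6) <> 0%C) by (apply C_neq0_Re, pow_nonzero; lra).
    transitivity (/ RtoC (s ^ 6) * (RtoC (s ^ 6) * disp_det s 1 nu))%C; [field; exact hs6|].
    rewrite hdet. ring.
  - apply Cmult_neq_0; [apply disp_e_neq0; auto|].
    unfold disp_d1. rewrite hX. apply C_neq0_Im. unfold X.
    destruct z as [zr zi]. simpl in *. apply Rgt_not_eq. field_simplify; [|lra].
    apply Rdiv_lt_0_compat; lra.
Qed.

Lemma disp_unstable_root s : sqrt 2 < s ->
  exists (k : Z) (nu : C),
    0 < Re nu /\ disp_det s (IZR k) nu = 0%C /\ disp_null s (IZR k) nu 0 <> 0%C.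
Proof.
  intros hs. pose proof (sqrt_pos 2). pose proof (sqrt_sqrt 2 ltac:(lra)).
  assert (hs0 : 0 < s) by lra. assert (hs2 : 2 < s ^ 2) by nra.
  destruct (Rlt_le_dec (s ^ 2) 3).
  - exists 0%Z. apply disp_root_k0; auto.
  - exists 1%Z. apply disp_root_k1; auto.
Qed.

Lemma mode_wave omega k c A t u :
  mode omega k c A t u = Cmult (c A) (wave (Im omega, - Re omega) (IZR k) t u).
Proof.
  unfold mode, wave. f_equal. destruct omega as [wr wi].
  unfold cexp. simpl. f_equal; f_equal; f_equal; ring.
Qed.

Lemma disp_mode_solves r0 s k nu : 0 < r0 -> 1 < s -> 2 < s ^ 2 -> disp_det s (IZR k) nu = 0%C ->
  solves r0 s (mode (Cmult Ci (Cplus nu (0, IZR k / 2))) k (disp_null s (IZR k) nu)).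
Proof.
  intros hr0 hs1 hs2 hdet.
  set (lam := Cplus nu (0, IZR k / 2)).
  assert (H : forall b, solves_real r0 s
    (fun A t u => part b (mode (Ci * lam)%C k (disp_null s (IZR k) nu) A t u))).
  { intros b B HB tau sigma.
    replace (fun A t u => part b (mode (Ci * lam)%C k (disp_null s (IZR k) nu) A t u))
      with (fun A t u => part b (disp_null s (IZR k) nu A * wave lam (IZR k) t u)%C).
    2: { extensionality A. extensionality t. extensionality u. rewrite mode_wave.
         do 3 f_equal. unfold lam. destruct nu. apply injective_projections; simpl; ring. }
    rewrite (LinNG_wave r0 s _ _ _ _ (Ginv_tab r0 s) (ncon_tab s) (Pot_tab r0 s)); auto.
    - unfold lam. rewrite LinNG_symbol_tab by auto.
      unfold disp_matrix, disp_null. rewrite arrow_mul_null by auto. unfold disp_det in hdet.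
      destruct (Nat.eqb B 2); [rewrite hdet|]; destruct b; simpl; ring.
    - intros. apply Ginv_string; auto.
    - intros. apply ncon_string; auto.
    - intros. apply Pot_string; auto. }
  split; [apply (H true) | apply (H false)].
Qed.

Theorem theorem1 (r0 s : R) (hr0 : 0 < r0) (hs : sqrt 2 < s) :
  exists (k : Z) (omega : C) (c : nat -> C),
    0 < Im omega /\
    (c 0%nat <> (0, 0) \/ c 1%nat <> (0, 0) \/ c 2%nat <> (0, 0)) /\
    solves r0 s (mode omega k c).
Proof.
  pose proof (sqrt_pos 2). pose proof (sqrt_sqrt 2 ltac:(lra)).
  assert (hs2 : 2 < s ^ 2) by nra. assert (hs1 : 1 < s) by nra.
  destruct (disp_unstable_root s hs) as (k & nu & hnu & hdet & hnull).
  exists k, (Cmult Ci (Cplus nu (0, IZR k / 2))), (disp_null s (IZR k) nu).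
  split; [|split].
  - destruct nu. simpl in *. lra.
  - left. exact hnull.
  - apply disp_mode_solves; auto.
Qed.
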